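(* Consider a single-hop switched network with $N$ queues and arrival rate vector $\lambda\in\Lambda$. (i) Every fluid model solution for the MW-$\alpha$ policy ($\alpha>0$) satisfies $\mathbf 1\cdot q(t)\le N^{\alpha/(1+\alpha)}\,\mathbf 1\cdot q(0)$ for all $t\ge0$. (ii) If $\lambda$ satisfies the complete loading condition, then every fluid model solution for any scheduling policy satisfies $\mathbf 1\cdot q(t)\ge\mathbf 1\cdot q(0)$ for all $t\ge0$.
   Context: Single-hop network: finite $\mathcal S\subset\mathbb R_+^N$. $\langle\mathcal S\rangle$ convex hull; $\Lambda=\{\lambda\in\mathbb R_+^N:\lambda\le\sigma$ for some $\sigma\in\langle\mathcal S\rangle\}$. $E$ = extreme points of $\{\xi\in\mathbb R_+^N:\max_\pi\xi\cdot\pi\le1\}$, $\mathcal S^*$ its maximal elements, $\Xi(\lambda)=\{\xi\in\mathcal S^*:\xi\cdot\lambda=1\}$. Complete loading condition: $\lambda\in\Lambda$ and $\mathbf 1/\max_{\pi\in\mathcal S}\mathbf 1\cdot\pi$ lies in the convex hull of $\Xi(\lambda)$. Fluid model solution for any scheduling policy with rate $\lambda$: absolutely continuous $q,y:[0,T]\to\mathbb R_+^N$, $s_\pi\ge0$ with $q(t)=q(0)+\lambda t-\sum_\pi s_\pi(t)\pi+y(t)$, $\sum_\pi s_\pi(t)=t$, $y(t)\le\sum_\pi s_\pi(t)\pi$, $s_\pi,y_n$ nondecreasing, and a.e. $\dot y_n(t)=0$ if $q_n(t)>0$. A fluid model solution for MW-$\alpha$ additionally satisfies a.e. $\dot s_\pi(t)=0$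 whenever $\pi\cdot q(t)^\alpha<\max_{\rho\in\mathcal S}\rho\cdot q(t)^\alpha$ (power taken componentwise). *)

From Stdlib Require Import Reals Lra.
Open Scope R_scope.

(* Vectors in R^N are functions nat -> R, only indices n < N matter.
   The finite schedule set S is given as an indexed family S 0, ..., S (K-1). *)

Fixpoint rsum (n : nat) (f : nat -> R) : R :=
  match n with O => 0 | S m => rsum m f + f m end.

(* maximum of f 0, ..., f (K-1)  (used with K >= 1) *)
Fixpoint rmaxk (K : nat) (f : nat -> R) : R :=
  match K with
  | O => 0
  | S O => f O
  | S m => Rmax (rmaxk m f) (f m)
  end.

Definition dot (N : nat) (x y : nat -> R) : R := rsum N (fun n => x n * y n).

Definition vle (N : nat) (x y : nat -> R) : Prop := forall n, (n < N)%nat -> x n <= y n.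
Definition veq (N : nat) (x y : nat -> R) : Prop := forall n, (n < N)%nat -> x n = y n.

(* componentwise power, with 0^alpha = 0 *)
Definition rpow (x a : R) : R := if Rlt_dec 0 x then Rpower x a else 0.

Definition in_conv (N : nat) (A : (nat -> R) -> Prop) (x : nat -> R) : Prop :=
  exists (m : nat) (p : nat -> nat -> R) (w : nat -> R),
    (forall i, (i < m)%nat -> A (p i) /\ 0 <= w i) /\
    rsum m w = 1 /\
    forall n, (n < N)%nat -> x n = rsum m (fun i => w i * p i n).

Definition schedset (N K : nat) (S : nat -> nat -> R) (x : nat -> R) : Prop :=
  exists k, (k < K)%nat /\ veq N x (S k).

Definition in_Lambda (N K : nat) (S : nat -> nat -> R) (lam : nat -> R) : Prop :=
  (forall n, (n < N)%nat -> 0 <= lam n) /\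
  exists sigma, in_conv N (schedset N K S) sigma /\ vle N lam sigma.

Definition in_dualP (N K : nat) (S : nat -> nat -> R) (xi : nat -> R) : Prop :=
  (forall n, (n < N)%nat -> 0 <= xi n) /\
  rmaxk K (fun k => dot N xi (S k)) <= 1.

Definition in_E (N K : nat) (S : nat -> nat -> R) (xi : nat -> R) : Prop :=
  in_dualP N K S xi /\
  forall (x y : nat -> R) (th : R),
    in_dualP N K S x -> in_dualP N K S y -> 0 < th < 1 ->
    veq N xi (fun n => th * x n + (1 - th) * y n) -> veq N x y.

Definition in_Sstar (N K : nat) (S : nat -> nat -> R) (xi : nat -> R) : Prop :=
  in_E N K S xi /\
  forall xi', in_E N K S xi' -> vle N xi xi' -> veq N xi xi'.

Definition in_Xi (N K : nat) (S : nat -> nat -> R) (lam xi : nat -> R) : Prop :=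
  in_Sstar N K S xi /\ dot N xi lam = 1.

Definition complete_loading (N K : nat) (S : nat -> nat -> R) (lam : nat -> R) : Prop :=
  in_Lambda N K S lam /\
  in_conv N (in_Xi N K S lam)
    (fun _ => 1 / rmaxk K (fun k => rsum N (S k))).

Definition null_set (E : R -> Prop) : Prop :=
  forall eps, 0 < eps ->
    exists a b : nat -> R,
      (forall x, E x -> exists i, a i < x < b i) /\
      (forall i, a i <= b i) /\
      (forall m, rsum m (fun i => b i - a i) <= eps).

Definition ae_on (T : R) (P : R -> Prop) : Prop :=
  null_set (fun t => 0 <= t <= T /\ ~ P t).

Definition abs_cont_on (a b : R) (f : R -> R) : Prop :=
  forall eps, 0 < eps -> exists delta, 0 < delta /\
    forall (m : nat) (u v : nat -> R),
      (forall i, (i < m)%nat -> a <= u i /\ u i <= v i /\ v i <= b) ->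
      (forall i j, (i < m)%nat -> (j < m)%nat -> i <> j -> v i <= u j \/ v j <= u i) ->
      rsum m (fun i => v i - u i) < delta ->
      rsum m (fun i => Rabs (f (v i) - f (u i))) < eps.

Definition nondecr_on (T : R) (f : R -> R) : Prop :=
  forall u v, 0 <= u -> u <= v -> v <= T -> f u <= f v.

(* Fluid model solution on [0,T] (any scheduling policy), arrival rate lam.
   q n, y n : component n of q, y;  s k : cumulative time on schedule S k. *)
Definition fluid_sol (N K : nat) (S : nat -> nat -> R) (lam : nat -> R) (T : R)
  (q y s : nat -> R -> R) : Prop :=
  (forall n, (n < N)%nat ->
     abs_cont_on 0 T (q n) /\ abs_cont_on 0 T (y n) /\ nondecr_on T (y n) /\
     (forall t, 0 <= t <= T -> 0 <= q n t /\ 0 <= y n t)) /\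
  (forall k, (k < K)%nat ->
     nondecr_on T (s k) /\ (forall t, 0 <= t <= T -> 0 <= s k t)) /\
  (forall t, 0 <= t <= T ->
     rsum K (fun k => s k t) = t /\
     forall n, (n < N)%nat ->
       q n t = q n 0 + lam n * t - rsum K (fun k => s k t * S k n) + y n t /\
       y n t <= rsum K (fun k => s k t * S k n)) /\
  (forall n, (n < N)%nat ->
     ae_on T (fun t => 0 < q n t -> derivable_pt_lim (y n) t 0)).

Definition mw_fluid_sol (N K : nat) (S : nat -> nat -> R) (alpha : R) (lam : nat -> R)
  (T : R) (q y s : nat -> R -> R) : Prop :=
  fluid_sol N K S lam T q y s /\
  forall k, (k < K)%nat ->
    ae_on T (fun t =>
      dot N (S k) (fun n => rpow (q n t) alpha)
        < rmaxk K (fun j => dot N (S j) (fun n => rpow (q n t) alpha)) ->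
      derivable_pt_lim (s k) t 0).

From Stdlib Require Import Reals Lra Lia Classical.
Open Scope R_scope.

(* (i) L(q) = sum_n q_n^(1+alpha) is a Lyapunov function for MW-alpha: by convexity,
   dL/dt <= (1+alpha) q^alpha . (lam - sum_pi s_pi' pi + y'), idling happens only at empty
   queues, MW uses only schedules of maximal weight pi . q^alpha, and lam lies below a
   convex combination of schedules, so dL/dt <= 0.  Since q is merely absolutely
   continuous, this is run on short intervals, using that an absolutely continuous function
   with zero derivative almost everywhere is constant.  The bound then follows from
   sum q(t) <= N^(alpha/(1+alpha)) L(q(t))^(1/(1+alpha)) (power means) and
   L(q(0)) <= (sum q(0))^(1+alpha) (superadditivity).
   (ii) For xi in Xi(lam), xi . q(t) >= xi . q(0) + t xi . lam - sum_pi s_pi(t) xi . pi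
   >= xi . q(0), because xi . lam = 1, xi . pi <= 1 and sum_pi s_pi(t) = t; a positive
   multiple of the all-ones vector is a convex combination of such xi. *)

(** * Finite sums and maxima *)

Lemma rsum_ext n f g : (forall i, (i < n)%nat -> f i = g i) -> rsum n f = rsum n g.
Proof. induction n as [|n IH]; intros H; simpl; auto. rewrite IH, H; auto; intros; apply H; lia. Qed.

Lemma rsum_le n f g : (forall i, (i < n)%nat -> f i <= g i) -> rsum n f <= rsum n g.
Proof.
  induction n as [|n IH]; intros H; simpl; [lra|].
  assert (rsum n f <= rsum n g) by (apply IH; intros; apply H; lia).
  assert (f n <= g n) by (apply H; lia). lra.
Qed.

Lemma rsum_plus n f g : rsum n (fun i => f i + g i) = rsum n f + rsum n g.
Proof. induction n as [|n IH]; simpl; [lra|]. rewrite IH; lra. Qed.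

Lemma rsum_minus n f g : rsum n (fun i => f i - g i) = rsum n f - rsum n g.
Proof. induction n as [|n IH]; simpl; [lra|]. rewrite IH; lra. Qed.

Lemma rsum_mult_l n c f : rsum n (fun i => c * f i) = c * rsum n f.
Proof. induction n as [|n IH]; simpl; [lra|]. rewrite IH; lra. Qed.

Lemma rsum_mult_r n c f : rsum n (fun i => f i * c) = rsum n f * c.
Proof. induction n as [|n IH]; simpl; [lra|]. rewrite IH; lra. Qed.

Lemma rsum_const n c : rsum n (fun _ => c) = INR n * c.
Proof. induction n as [|n IH]; simpl rsum; [simpl; ring|]. rewrite IH, S_INR. ring. Qed.

Lemma rsum_nonneg n f : (forall i, (i < n)%nat -> 0 <= f i) -> 0 <= rsum n f.
Proof.
  intros H. replace 0 with (rsum n (fun _ => 0)) by (rewrite rsum_const; ring).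
  apply rsum_le; auto.
Qed.

Lemma rsum_ge_term n f i :
  (forall j, (j < n)%nat -> 0 <= f j) -> (i < n)%nat -> f i <= rsum n f.
Proof.
  induction n as [|n IH]; intros H Hi; [lia|]. simpl.
  assert (0 <= rsum n f) by (apply rsum_nonneg; intros; apply H; lia).
  destruct (Nat.eq_dec i n) as [->|Hne]; [lra|].
  assert (f i <= rsum n f) by (apply IH; [intros; apply H|]; lia).
  assert (0 <= f n) by (apply H; lia). lra.
Qed.

Lemma rsum_comm n m (f : nat -> nat -> R) :
  rsum n (fun i => rsum m (fun j => f i j)) = rsum m (fun j => rsum n (fun i => f i j)).
Proof.
  induction n as [|n IH]; simpl.
  - rewrite rsum_const; ring.
  - rewrite IH, <- rsum_plus. reflexivity.
Qed.

Lemma rsum_telescope n (g : nat -> R) : rsum n (fun j => g (S j) - g j) = g n - g O.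
Proof. induction n as [|n IH]; simpl; [lra|]. rewrite IH. lra. Qed.

Lemma Rabs_rsum_le n f : Rabs (rsum n f) <= rsum n (fun i => Rabs (f i)).
Proof.
  induction n as [|n IH]; simpl; [rewrite Rabs_R0; lra|].
  eapply Rle_trans; [apply Rabs_triang|]. lra.
Qed.

Lemma rmaxk_ge K f k : (k < K)%nat -> f k <= rmaxk K f.
Proof.
  induction K as [|K IH]; intros H; [lia|]. destruct K as [|K].
  - replace k with O by lia. simpl; lra.
  - change (rmaxk (S (S K)) f) with (Rmax (rmaxk (S K) f) (f (S K))).
    destruct (Nat.eq_dec k (S K)) as [->|Hne]; [apply Rmax_r|].
    eapply Rle_trans; [apply IH; lia | apply Rmax_l].
Qed.

Lemma rmaxk_attained K f : (0 < K)%nat -> exists k, (k < K)%nat /\ rmaxk K f = f k.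
Proof.
  induction K as [|K IH]; intros H; [lia|]. destruct K as [|K]; [exists O; auto|].
  change (rmaxk (S (S K)) f) with (Rmax (rmaxk (S K) f) (f (S K))).
  destruct (IH ltac:(lia)) as [k [Hk E]]. unfold Rmax. destruct Rle_dec.
  - exists (S K); auto.
  - exists k; auto.
Qed.

Lemma dot_conv N m (p : nat -> nat -> R) w x v :
  (forall n, (n < N)%nat -> x n = rsum m (fun i => w i * p i n)) ->
  dot N x v = rsum m (fun i => w i * dot N (p i) v).
Proof.
  intros Hx. unfold dot.
  rewrite (rsum_ext N _ (fun n => rsum m (fun i => w i * p i n * v n))).
  - rewrite rsum_comm. apply rsum_ext. intros i _.
    rewrite <- rsum_mult_l. apply rsum_ext; intros; ring.
  - intros n Hn. rewrite Hx, <- rsum_mult_r by auto. reflexivity.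
Qed.

Lemma dot_Lambda_le_max N K S lam W :
  in_Lambda N K S lam -> (forall n, (n < N)%nat -> 0 <= W n) ->
  dot N lam W <= rmaxk K (fun k => dot N (S k) W).
Proof.
  intros [_ [sig [[m [p [w [Hp [Hw Hsig]]]]] Hle]]] HW.
  apply Rle_trans with (dot N sig W).
  { apply rsum_le. intros n Hn. apply Rmult_le_compat_r; auto. }
  rewrite (dot_conv N m p w sig W Hsig).
  apply Rle_trans with (rsum m (fun i => w i * rmaxk K (fun k => dot N (S k) W))).
  - apply rsum_le. intros i Hi. destruct (Hp i Hi) as [[k [Hk Hpk]] Hwi].
    apply Rmult_le_compat_l; auto.
    replace (dot N (p i) W) with (dot N (S k) W)
      by (apply rsum_ext; intros n Hn; rewrite Hpk; auto).
    apply (rmaxk_ge K (fun k => dot N (S k) W)); auto.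
  - rewrite rsum_mult_r, Hw. lra.
Qed.

(** * Part (ii): complete loading *)

Lemma fluid_dot_nondecr N K S lam T q y s xi t :
  fluid_sol N K S lam T q y s -> 0 <= t <= T ->
  (forall n, (n < N)%nat -> 0 <= xi n) -> dot N xi lam = 1 ->
  (forall k, (k < K)%nat -> dot N xi (S k) <= 1) ->
  dot N xi (fun n => q n 0) <= dot N xi (fun n => q n t).
Proof.
  intros [Hqy [Hs [Hdyn _]]] Ht Hxi Hlam HxiS.
  destruct (Hdyn t Ht) as [Hst Hq].
  assert (Hserv : rsum N (fun n => xi n * rsum K (fun k => s k t * S k n))
                  = rsum K (fun k => s k t * dot N xi (S k))).
  { unfold dot. rewrite (rsum_ext N _ (fun n => rsum K (fun k => xi n * (s k t * S k n)))).
    - rewrite rsum_comm. apply rsum_ext; intros k _.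
      rewrite <- rsum_mult_l. apply rsum_ext; intros; ring.
    - intros; rewrite <- rsum_mult_l; auto. }
  assert (Hserv_le : rsum K (fun k => s k t * dot N xi (S k)) <= rsum K (fun k => s k t)).
  { apply rsum_le. intros k Hk. destruct (Hs k Hk) as [_ Hs0].
    rewrite <- (Rmult_1_r (s k t)) at 2. apply Rmult_le_compat_l; auto. }
  assert (Hidle : rsum N (fun n => (xi n * q n 0 + t * (xi n * lam n))
                                   - xi n * rsum K (fun k => s k t * S k n))
                  <= dot N xi (fun n => q n t)).
  { apply rsum_le. intros n Hn. destruct (Hq n Hn) as [-> _].
    destruct (Hqy n Hn) as [_ [_ [_ Hy]]]. destruct (Hy t Ht) as [_ Hy0].
    assert (0 <= xi n * y n t) by (apply Rmult_le_pos; auto). lra. }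
  rewrite rsum_minus, rsum_plus, rsum_mult_l, Hserv in Hidle.
  change (rsum N (fun n => xi n * lam n)) with (dot N xi lam) in Hidle.
  change (rsum N (fun n => xi n * q n 0)) with (dot N xi (fun n => q n 0)) in Hidle.
  rewrite Hlam in Hidle. lra.
Qed.

Lemma complete_loading_total_nondecr N K S lam T q y s t :
  (0 < K)%nat -> (forall k n, (k < K)%nat -> (n < N)%nat -> 0 <= S k n) ->
  complete_loading N K S lam -> fluid_sol N K S lam T q y s -> 0 <= t <= T ->
  rsum N (fun n => q n 0) <= rsum N (fun n => q n t).
Proof.
  intros HK HS [_ [m [p [w [Hp [Hw Hconv]]]]]] Hfl Ht.
  set (c := rmaxk K (fun k => rsum N (S k))) in *.
  assert (Hc : 0 <= c).
  { eapply Rle_trans; [|apply (rmaxk_ge K _ O HK)].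
    apply rsum_nonneg; intros; apply HS; lia. }
  assert (Hmix : forall v, 1 / c * rsum N v = rsum m (fun i => w i * dot N (p i) v)).
  { intros v. rewrite <- (dot_conv N m p w _ v Hconv). unfold dot. rewrite rsum_mult_l; auto. }
  destruct (Rle_lt_or_eq_dec _ _ Hc) as [Hcpos|Hc0].
  - apply Rmult_le_reg_l with (1 / c); [apply Rdiv_lt_0_compat; lra|].
    rewrite !Hmix. apply rsum_le. intros i Hi.
    destruct (Hp i Hi) as [[[[[Hpi0 Hpi1] _] _] Hpilam] Hwi].
    apply Rmult_le_compat_l; auto. eapply fluid_dot_nondecr; eauto.
    intros k Hk. eapply Rle_trans; [|apply Hpi1].
    apply (rmaxk_ge K (fun k => dot N (p i) (S k))); auto.
  - (* c = 0 is impossible: then 1 / c = 0, and pairing with lam gives 0 = rsum m w = 1. *)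
    exfalso. specialize (Hmix lam). rewrite <- Hc0, Rdiv_0_r, Rmult_0_l in Hmix.
    rewrite (rsum_ext m _ w) in Hmix; [lra|].
    intros i Hi. destruct (Hp i Hi) as [[_ ->] _]. ring.
Qed.

(** * Zero derivative almost everywhere *)

Lemma le_0_of_le_eps_mult D c : 0 <= c -> (forall e, 0 < e -> D <= e * c) -> D <= 0.
Proof.
  intros Hc H. destruct (Rle_dec D 0) as [|HD]; auto.
  assert (He : 0 < D / (2 * (c + 1))) by (apply Rdiv_lt_0_compat; lra).
  specialize (H _ He).
  assert (D / (2 * (c + 1)) * c <= D / 2).
  { apply Rmult_le_reg_r with (2 * (c + 1)); [lra|].
    replace (D / (2 * (c + 1)) * c * (2 * (c + 1))) with (D * c) by (field; lra).
    nra. }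
  lra.
Qed.

Lemma derivable_pt_lim_0_bound f c eps : derivable_pt_lim f c 0 -> 0 < eps ->
  exists r, 0 < r /\ forall h, Rabs h < r -> Rabs (f (c + h) - f c) <= eps * Rabs h.
Proof.
  intros Hf He. destruct (Hf eps He) as [[r Hr] Hlim]. exists r; split; auto.
  intros h Hh. destruct (Req_dec h 0) as [->|Hh0].
  - rewrite Rplus_0_r, Rminus_diag, Rabs_R0; lra.
  - specialize (Hlim h Hh0 Hh). rewrite Rminus_0_r in Hlim. unfold Rdiv in Hlim.
    rewrite Rabs_mult, Rabs_inv in Hlim.
    assert (0 < Rabs h) by (apply Rabs_pos_lt; auto).
    apply Rmult_lt_compat_r with (r := Rabs h) in Hlim; auto.
    rewrite Rmult_assoc, Rinv_l, Rmult_1_r in Hlim by lra. lra.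
Qed.

Lemma is_lub_approx (P : R -> Prop) c y : is_lub P c -> y < c -> exists x, P x /\ y < x.
Proof.
  intros [_ Hleast] Hy. apply NNPP; intros Hnone.
  assert (c <= y); [|lra]. apply Hleast. intros x Hx.
  destruct (Rle_dec x y); auto. exfalso; apply Hnone; exists x; split; auto; lra.
Qed.

(* A Vitali-type covering argument: sweep [a, b] from the left, charging the
   growth of f either to eps times the length where f' = 0, or to the variation
   of f on disjoint intervals inside the cover (au i, bu i) of the null set. *)
Section ZeroDerivativeAE.
Variables (f : R -> R) (a b eps : R) (au bu : nat -> R).
Hypothesis Hab : a <= b.
Hypothesis Heps : 0 < eps.
Hypothesis Hcover : forall i, au i <= bu i.

Definition cover_part k x := Rmax 0 (Rmin x (bu k) - au k).
Definition cover_below K0 x := rsum K0 (fun k => cover_part k x).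

Lemma cover_part_mono k x y : x <= y -> cover_part k x <= cover_part k y.
Proof.
  intros Hxy. unfold cover_part. apply Rle_max_compat_l.
  assert (Rmin x (bu k) <= Rmin y (bu k)) by (apply Rle_min_compat_r; auto). lra.
Qed.

Lemma cover_below_mono K0 x y : x <= y -> cover_below K0 x <= cover_below K0 y.
Proof. intros; apply rsum_le; intros; apply cover_part_mono; auto. Qed.

Lemma cover_below_widen K0 K1 x : (K0 <= K1)%nat -> cover_below K0 x <= cover_below K1 x.
Proof.
  induction 1; [lra|]. unfold cover_below in *; simpl.
  assert (0 <= cover_part m x) by apply Rmax_l. lra.
Qed.

Lemma cover_below_le_length K0 x : cover_below K0 x <= rsum K0 (fun k => bu k - au k).
Proof.
  apply rsum_le; intros k _. unfold cover_part. apply Rmax_lub.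
  - specialize (Hcover k); lra.
  - assert (Rmin x (bu k) <= bu k) by apply Rmin_r. lra.
Qed.

Lemma cover_below_step K0 k x z : (k < K0)%nat -> au k <= x -> x <= z -> z <= bu k ->
  cover_below K0 x + (z - x) <= cover_below K0 z.
Proof.
  intros Hk H1 H2 H3. unfold cover_below.
  assert (rsum K0 (fun j => cover_part j z - cover_part j x) >= z - x);
    [|rewrite rsum_minus in *; lra].
  apply Rle_ge. eapply Rle_trans; [|apply (rsum_ge_term _ _ k)]; auto.
  - unfold cover_part. rewrite !Rmin_left by lra. rewrite !Rmax_right by lra. lra.
  - intros j _. pose proof (cover_part_mono j x z H2); lra.
Qed.

Definition tracked x := exists m (u v : nat -> R) K0,
  (forall i, (i < m)%nat -> a <= u i /\ u i <= v i /\ v i <= x) /\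
  (forall i j, (i < m)%nat -> (j < m)%nat -> i <> j -> v i <= u j \/ v j <= u i) /\
  rsum m (fun i => v i - u i) <= cover_below K0 x /\
  f x - f a <= eps * (x - a) + rsum m (fun i => Rabs (f (v i) - f (u i))).

Lemma tracked_start : tracked a.
Proof.
  exists O, (fun _ => 0), (fun _ => 0), O. simpl.
  repeat split; intros; try lia; unfold cover_below; simpl; lra.
Qed.

Lemma tracked_flat x y : tracked x -> x <= y -> f y - f x <= eps * (y - x) -> tracked y.
Proof.
  intros [m [u [v [K0 [H1 [H2 [H3 H4]]]]]]] Hxy Hf. exists m, u, v, K0.
  pose proof (cover_below_mono K0 x y Hxy).
  split; [|split; [|split]]; auto; try lra.
  intros i Hi; destruct (H1 i Hi) as [? [? ?]]; repeat split; lra.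
Qed.

Lemma tracked_covered x z k : tracked x -> a <= x -> x <= z -> au k <= x -> z <= bu k ->
  tracked z.
Proof.
  intros [m [u [v [K0 [H1 [H2 [H3 H4]]]]]]] Hax Hxz Hk1 Hk2.
  set (u' := fun i => if Nat.eqb i m then x else u i).
  set (v' := fun i => if Nat.eqb i m then z else v i).
  assert (Hold : forall F : R -> R -> R,
            rsum m (fun i => F (v' i) (u' i)) = rsum m (fun i => F (v i) (u i))).
  { intros F; apply rsum_ext; intros i Hi. unfold u', v'.
    replace (Nat.eqb i m) with false; auto. symmetry; apply Nat.eqb_neq; lia. }
  exists (S m), u', v', (Nat.max K0 (S k)).
  split; [|split; [|split]].
  - intros i Hi. unfold u', v'. destruct (Nat.eqb_spec i m); [repeat split; lra|].
    destruct (H1 i ltac:(lia)) as [? [? ?]]; repeat split; lra.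
  - intros i j Hi Hj Hij. unfold u', v'.
    destruct (Nat.eqb_spec i m), (Nat.eqb_spec j m); try lia.
    + destruct (H1 j ltac:(lia)) as [? [? ?]]. right; lra.
    + destruct (H1 i ltac:(lia)) as [? [? ?]]. left; lra.
    + apply H2; lia.
  - simpl. rewrite (Hold (fun p q => p - q)). unfold u', v'. rewrite Nat.eqb_refl.
    pose proof (cover_below_widen K0 (Nat.max K0 (S k)) x ltac:(lia)).
    pose proof (cover_below_step (Nat.max K0 (S k)) k x z ltac:(lia) Hk1 Hxz Hk2). lra.
  - simpl. rewrite (Hold (fun p q => Rabs (f p - f q))). unfold u', v'. rewrite Nat.eqb_refl.
    pose proof (Rle_abs (f z - f x)).
    assert (0 <= eps * (z - x)) by (apply Rmult_le_pos; lra). lra.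
Qed.

Lemma tracked_beyond_lub c : is_lub (fun x => a <= x <= b /\ tracked x) c ->
  a <= c -> c <= b -> forall d, 0 < d -> tracked (Rmin b (c + d)) -> tracked b.
Proof.
  intros Hc Hac Hcb d Hd Hz. set (z := Rmin b (c + d)) in Hz.
  destruct (Rlt_dec c b) as [Hlt|Hge].
  - exfalso. assert (c < z) by (apply Rmin_glb_lt; lra).
    assert (z <= c); [|lra]. apply (proj1 Hc). split; auto.
    split; [lra|apply Rmin_l].
  - replace b with z; auto. unfold z. rewrite Rmin_left; lra.
Qed.

Lemma tracked_end (E : R -> Prop) : (forall x, E x -> exists i, au i < x < bu i) ->
  (forall t, a <= t <= b -> ~ E t -> derivable_pt_lim f t 0) -> tracked b.
Proof.
  intros HE Hf.
  set (P := fun x => a <= x <= b /\ tracked x).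
  destruct (completeness P) as [c Hc].
  { exists b; intros x [Hx _]; lra. }
  { exists a; split; [lra|apply tracked_start]. }
  assert (Hac : a <= c) by (apply (proj1 Hc); split; [lra|apply tracked_start]).
  assert (Hcb : c <= b) by (apply (proj2 Hc); intros x [Hx _]; lra).
  pose proof (tracked_beyond_lub c Hc Hac Hcb) as Hbeyond.
  assert (Hz : forall d, 0 < d -> c <= Rmin b (c + d) <= c + d)
    by (intros; split; [apply Rmin_glb|apply Rmin_r]; lra).
  destruct (classic (E c)) as [Ec|Ec].
  - destruct (HE c Ec) as [i Hi].
    destruct (is_lub_approx P c (au i) Hc ltac:(lra)) as [x [[Hx Hxtr] Hxi]].
    assert (x <= c) by (apply (proj1 Hc); split; auto).
    apply (Hbeyond ((bu i - c) / 2)); [lra|].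
    pose proof (Hz ((bu i - c) / 2) ltac:(lra)).
    apply (tracked_covered x _ i); auto; lra.
  - destruct (derivable_pt_lim_0_bound f c eps (Hf c ltac:(lra) Ec) Heps) as [r [Hr Hrb]].
    destruct (is_lub_approx P c (c - r) Hc ltac:(lra)) as [x [[Hx Hxtr] Hxr]].
    assert (x <= c) by (apply (proj1 Hc); split; auto).
    assert (Hctr : tracked c).
    { apply (tracked_flat x c Hxtr); auto.
      specialize (Hrb (x - c) ltac:(rewrite Rabs_left1; lra)).
      replace (c + (x - c)) with x in Hrb by ring.
      rewrite (Rabs_left1 (x - c)), Rabs_minus_sym in Hrb by lra.
      pose proof (Rle_abs (f c - f x)). lra. }
    apply (Hbeyond (r / 2)); [lra|].
    pose proof (Hz (r / 2) ltac:(lra)) as Hzr. set (z := Rmin b (c + r / 2)) in *.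
    apply (tracked_flat c z Hctr); [lra|].
    specialize (Hrb (z - c) ltac:(rewrite Rabs_right; lra)).
    replace (c + (z - c)) with z in Hrb by ring.
    rewrite (Rabs_right (z - c)) in Hrb by lra.
    pose proof (Rle_abs (f z - f c)). lra.
Qed.

End ZeroDerivativeAE.

Lemma abs_cont_deriv_0_ae_le f a b (E : R -> Prop) : a <= b -> null_set E ->
  abs_cont_on a b f -> (forall t, a <= t <= b -> ~ E t -> derivable_pt_lim f t 0) ->
  f b <= f a.
Proof.
  intros Hab HE Hac Hf.
  cut (f b - f a <= 0); [lra|].
  apply (le_0_of_le_eps_mult _ (b - a + 1)); [lra|]. intros e He.
  destruct (Hac e He) as [d [Hd Hvar]].
  destruct (HE (d / 2) ltac:(lra)) as [au [bu [Hcov [Hab_i Hlen]]]].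
  destruct (tracked_end f a b e au bu Hab He E Hcov Hf)
    as [m [u [v [K0 [H1 [H2 [H3 H4]]]]]]].
  assert (rsum m (fun i => Rabs (f (v i) - f (u i))) < e).
  { apply Hvar; [|exact H2|].
    - intros i Hi; destruct (H1 i Hi) as [? [? ?]]; repeat split; lra.
    - pose proof (cover_below_le_length au bu Hab_i K0 b). specialize (Hlen K0). lra. }
  lra.
Qed.

(** * Powers *)

Lemma Rpower_pos x a : 0 < Rpower x a.
Proof. apply exp_pos. Qed.

Lemma rpow_Rpower x a : 0 < x -> rpow x a = Rpower x a.
Proof. intros H. unfold rpow. destruct Rlt_dec; auto; lra. Qed.

Lemma rpow_le_0 x a : x <= 0 -> rpow x a = 0.
Proof. intros H. unfold rpow. destruct Rlt_dec; auto; lra. Qed.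

Lemma rpow_nonneg x a : 0 <= rpow x a.
Proof. unfold rpow. destruct Rlt_dec; [left; apply Rpower_pos | lra]. Qed.

Lemma rpow_le_compat x y a : 0 <= a -> 0 <= x <= y -> rpow x a <= rpow y a.
Proof.
  intros Ha Hxy. destruct (Rle_lt_dec x 0).
  - rewrite (rpow_le_0 x) by auto. apply rpow_nonneg.
  - rewrite !rpow_Rpower by lra. apply Rle_Rpower_l; lra.
Qed.

Lemma rpow_1_plus x a : 0 <= x -> rpow x (1 + a) = x * rpow x a.
Proof.
  intros H. destruct (Rle_lt_dec x 0).
  - rewrite !rpow_le_0 by auto. ring.
  - rewrite !rpow_Rpower, Rpower_plus, Rpower_1 by lra. reflexivity.
Qed.

Lemma rpow_rpow x a b : 0 <= x -> rpow (rpow x a) b = rpow x (a * b).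
Proof.
  intros Hx. destruct (Rle_lt_dec x 0).
  - rewrite !(rpow_le_0 x) by auto. apply rpow_le_0; lra.
  - rewrite (rpow_Rpower x) by auto. rewrite !rpow_Rpower by (auto || apply Rpower_pos).
    apply Rpower_mult.
Qed.

Lemma rpow_1 x : 0 <= x -> rpow x 1 = x.
Proof.
  intros Hx. destruct (Rle_lt_dec x 0).
  - rewrite rpow_le_0; lra.
  - rewrite rpow_Rpower by auto. apply Rpower_1; auto.
Qed.

Lemma rpow_rpow_inv x a : 0 <= x -> a <> 0 -> rpow (rpow x a) (1 / a) = x.
Proof.
  intros Hx Ha. rewrite rpow_rpow by auto.
  replace (a * (1 / a)) with 1 by (field; auto). apply rpow_1; auto.
Qed.

Lemma rpow_inv_rpow x a : 0 <= x -> a <> 0 -> rpow (rpow x (1 / a)) a = x.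
Proof.
  intros Hx Ha. rewrite rpow_rpow by auto.
  replace (1 / a * a) with 1 by (field; auto). apply rpow_1; auto.
Qed.

Lemma rpow_tangent_le a x m : 0 < a -> 0 <= x -> 0 <= m ->
  rpow m (1 + a) + (1 + a) * rpow m a * (x - m) <= rpow x (1 + a).
Proof.
  intros Ha Hx Hm. destruct (Req_dec m 0) as [->|Hm0].
  { rewrite !rpow_le_0 by lra. pose proof (rpow_nonneg x (1 + a)). lra. }
  destruct (Req_dec x 0) as [->|Hx0].
  { rewrite rpow_1_plus, (rpow_le_0 0) by lra. pose proof (rpow_nonneg m a).
    assert (0 <= a * (m * rpow m a)) by (apply Rmult_le_pos; [lra|apply Rmult_le_pos; lra]).
    nra. }
  assert (Hd : forall c, 0 < c ->
             derivable_pt_lim (fun y => Rpower y (1 + a)) c ((1 + a) * Rpower c a)).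
  { intros c Hc. replace a with ((1 + a) - 1) at 2 by ring.
    apply derivable_pt_lim_power; auto. }
  rewrite !rpow_Rpower by lra.
  destruct (Rlt_le_dec m x) as [Hlt|Hle].
  - destruct (MVT_cor2 (fun y => Rpower y (1 + a)) (fun c => (1 + a) * Rpower c a) m x Hlt)
      as [c [Ec Hc]]; [intros c Hc; apply Hd; lra|].
    assert (Rpower m a <= Rpower c a) by (apply Rle_Rpower_l; lra).
    assert ((1 + a) * Rpower m a * (x - m) <= (1 + a) * Rpower c a * (x - m))
      by (apply Rmult_le_compat_r; [|apply Rmult_le_compat_l]; lra).
    simpl in Ec. lra.
  - destruct (Req_dec x m) as [->|Hne]; [lra|].
    destruct (MVT_cor2 (fun y => Rpower y (1 + a)) (fun c => (1 + a) * Rpower c a) x m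
                ltac:(lra)) as [c [Ec Hc]]; [intros c Hc; apply Hd; lra|].
    assert (Rpower c a <= Rpower m a) by (apply Rle_Rpower_l; lra).
    assert ((1 + a) * Rpower c a * (m - x) <= (1 + a) * Rpower m a * (m - x))
      by (apply Rmult_le_compat_r; [|apply Rmult_le_compat_l]; lra).
    simpl in Ec. lra.
Qed.

Lemma rpow_plus_le a u v : 0 < a -> 0 <= u -> 0 <= v ->
  rpow u (1 + a) + rpow v (1 + a) <= rpow (u + v) (1 + a).
Proof.
  intros Ha Hu Hv. rewrite !rpow_1_plus by lra.
  assert (rpow u a <= rpow (u + v) a) by (apply rpow_le_compat; lra).
  assert (rpow v a <= rpow (u + v) a) by (apply rpow_le_compat; lra).
  assert (u * rpow u a <= u * rpow (u + v) a) by (apply Rmult_le_compat_l; lra).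
  assert (v * rpow v a <= v * rpow (u + v) a) by (apply Rmult_le_compat_l; lra).
  lra.
Qed.

Lemma rsum_rpow_le_rpow_rsum a N x : 0 < a -> (forall n, (n < N)%nat -> 0 <= x n) ->
  rsum N (fun n => rpow (x n) (1 + a)) <= rpow (rsum N x) (1 + a).
Proof.
  intros Ha. induction N as [|N IH]; intros Hx; simpl.
  - rewrite rpow_le_0 by lra. lra.
  - assert (rsum N (fun n => rpow (x n) (1 + a)) <= rpow (rsum N x) (1 + a))
      by (apply IH; intros; apply Hx; lia).
    pose proof (rpow_plus_le a (rsum N x) (x N) Ha
                  ltac:(apply rsum_nonneg; intros; apply Hx; lia) ltac:(apply Hx; lia)).
    lra.
Qed.

(* Tangent inequality at the mean m = (sum x) / N. *)
Lemma rsum_le_power_mean a N x : 0 < a -> (0 < N)%nat -> (forall n, (n < N)%nat -> 0 <= x n) ->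
  rsum N x <= Rpower (INR N) (a / (1 + a)) * rpow (rsum N (fun n => rpow (x n) (1 + a))) (1 / (1 + a)).
Proof.
  intros Ha HN Hx. set (s := rsum N x). set (A := rsum N (fun n => rpow (x n) (1 + a))).
  assert (HNr : 0 < INR N) by (apply lt_0_INR; auto).
  assert (Hs : 0 <= s) by (apply rsum_nonneg; auto).
  set (m := s / INR N).
  assert (Hm : 0 <= m) by (apply Rmult_le_pos; [|left; apply Rinv_0_lt_compat]; auto).
  assert (HA : INR N * rpow m (1 + a) <= A).
  { assert (H : rsum N (fun n => rpow m (1 + a) + (1 + a) * rpow m a * (x n - m)) <= A)
      by (apply rsum_le; intros; apply rpow_tangent_le; auto).
    rewrite rsum_plus, rsum_mult_l, rsum_minus, !rsum_const in H. fold s in H.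
    replace (s - INR N * m) with 0 in H by (unfold m; field; lra). lra. }
  destruct (Req_dec s 0) as [Hs0|Hs0].
  { rewrite Hs0. apply Rmult_le_pos; [left; apply Rpower_pos|apply rpow_nonneg]. }
  assert (Hmpos : 0 < m) by (apply Rdiv_lt_0_compat; lra).
  assert (Hmono : rpow (INR N * rpow m (1 + a)) (1 / (1 + a)) <= rpow A (1 / (1 + a))).
  { apply rpow_le_compat; [left; apply Rdiv_lt_0_compat; lra|].
    split; auto. apply Rmult_le_pos; [lra|apply rpow_nonneg]. }
  assert (Hroot : rpow (INR N * rpow m (1 + a)) (1 / (1 + a)) = Rpower (INR N) (1 / (1 + a)) * m).
  { rewrite (rpow_Rpower m) by auto.
    rewrite rpow_Rpower by (apply Rmult_lt_0_compat; auto; apply Rpower_pos).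
    rewrite <- Rpower_mult_distr, Rpower_mult by (auto || apply Rpower_pos).
    replace ((1 + a) * (1 / (1 + a))) with 1 by (field; lra). rewrite Rpower_1; auto. }
  assert (Hs_eq : Rpower (INR N) (a / (1 + a)) * (Rpower (INR N) (1 / (1 + a)) * m) = s).
  { rewrite <- Rmult_assoc, <- Rpower_plus.
    replace (a / (1 + a) + 1 / (1 + a)) with 1 by (field; lra).
    rewrite Rpower_1 by auto. unfold m; field; lra. }
  rewrite Hroot in Hmono. rewrite <- Hs_eq at 1.
  apply Rmult_le_compat_l; [left; apply Rpower_pos | auto].
Qed.

(** * Uniform continuity *)

Lemma abs_cont_on_sub a b u v f : abs_cont_on a b f -> a <= u -> v <= b -> abs_cont_on u v f.
Proof.
  intros Hf Hu Hv e He. destruct (Hf e He) as [d [Hd Hvar]]. exists d; split; auto.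
  intros m uu vv H1 H2 H3. apply Hvar; auto.
  intros i Hi; destruct (H1 i Hi) as [? [? ?]]; repeat split; lra.
Qed.

Lemma abs_cont_on_lipschitz u v f :
  (forall x y, u <= x -> x <= y -> y <= v -> Rabs (f y - f x) <= y - x) -> abs_cont_on u v f.
Proof.
  intros Hf e He. exists e; split; auto. intros m uu vv H1 _ H3.
  eapply Rle_lt_trans; [|exact H3]. apply rsum_le.
  intros i Hi; destruct (H1 i Hi) as [? [? ?]]; apply Hf; auto.
Qed.

Lemma continuity_pt_eps f x0 : continuity_pt f x0 <->
  forall eps, 0 < eps -> exists d, 0 < d /\
    forall x, Rabs (x - x0) < d -> Rabs (f x - f x0) < eps.
Proof.
  split; intros H eps He; destruct (H eps He) as [d [Hd Hx]]; exists d; split; auto.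
  - intros x Hdx. destruct (Req_dec x x0) as [->|Hne].
    + rewrite Rminus_diag, Rabs_R0; auto.
    + apply (Hx x). split; [split; [exact I|auto]|exact Hdx].
  - intros x [_ Hdx]. apply Hx. exact Hdx.
Qed.

Lemma continuity_pt_rpow a x0 : 0 < a -> continuity_pt (fun x => rpow x a) x0.
Proof.
  intros Ha. destruct (Rtotal_order x0 0) as [Hneg|[->|Hpos]].
  - apply continuity_pt_locally_ext with (f := fun _ => 0) (a := - x0); [lra| |].
    + intros y Hy. unfold Rdist in Hy. apply Rabs_def2 in Hy. rewrite rpow_le_0; auto; lra.
    + apply continuity_pt_const. intros u v; auto.
  - apply continuity_pt_eps. intros eps He. exists (rpow eps (1 / a)).
    split; [rewrite rpow_Rpower by auto; apply Rpower_pos|].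
    intros x Hx. rewrite Rminus_0_r in Hx. rewrite (rpow_le_0 0), Rminus_0_r by lra.
    destruct (Rle_lt_dec x 0).
    + rewrite rpow_le_0, Rabs_R0 by auto. auto.
    + rewrite Rabs_right by (apply Rle_ge, rpow_nonneg).
      rewrite <- (rpow_inv_rpow eps a) by lra.
      rewrite Rabs_right in Hx by lra.
      rewrite (rpow_Rpower x), rpow_Rpower by (auto || (rewrite rpow_Rpower by auto; apply Rpower_pos)).
      apply Rlt_Rpower_l; auto.
  - apply continuity_pt_locally_ext with (f := fun x => Rpower x a) (a := x0); [lra| |].
    + intros y Hy. unfold Rdist in Hy. apply Rabs_def2 in Hy. rewrite rpow_Rpower; auto; lra.
    + apply derivable_continuous_pt. exists (a * Rpower x0 (a - 1)).
      apply derivable_pt_lim_power; auto.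
Qed.

Definition unif_cont_on (T : R) (f : R -> R) : Prop :=
  forall e, 0 < e -> exists d, 0 < d /\
    forall x y, 0 <= x <= T -> 0 <= y <= T -> Rabs (x - y) < d -> Rabs (f x - f y) < e.

Lemma abs_cont_unif_cont T f : abs_cont_on 0 T f -> unif_cont_on T f.
Proof.
  intros Hf e He. destruct (Hf e He) as [d [Hd Hvar]]. exists d; split; auto.
  assert (Hpair : forall x y, 0 <= x <= y -> y <= T -> y - x < d -> Rabs (f y - f x) < e).
  { intros x y Hxy HyT Hd'. specialize (Hvar 1%nat (fun _ => x) (fun _ => y)).
    simpl in Hvar. rewrite !Rplus_0_l in Hvar.
    apply Hvar; [intros; repeat split; lra | intros; lia | lra]. }
  intros x y Hx Hy Hxy. destruct (Rle_dec x y).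
  - rewrite Rabs_minus_sym. rewrite Rabs_minus_sym, Rabs_right in Hxy by lra.
    apply Hpair; lra.
  - rewrite Rabs_right in Hxy by lra. apply Hpair; lra.
Qed.

Lemma unif_cont_on_family T n (F : nat -> R -> R) :
  (forall i, (i < n)%nat -> unif_cont_on T (F i)) ->
  forall e, 0 < e -> exists d, 0 < d /\ forall i x y, (i < n)%nat ->
    0 <= x <= T -> 0 <= y <= T -> Rabs (x - y) < d -> Rabs (F i x - F i y) < e.
Proof.
  induction n as [|n IH]; intros HF e He; [exists 1; split; [lra|intros; lia]|].
  destruct (IH ltac:(intros; apply HF; lia) e He) as [d1 [Hd1 P1]].
  destruct (HF n ltac:(lia) e He) as [d2 [Hd2 P2]].
  exists (Rmin d1 d2); split; [apply Rmin_glb_lt; auto|].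
  intros i x y Hi Hx Hy Hxy. pose proof (Rmin_l d1 d2). pose proof (Rmin_r d1 d2).
  destruct (Nat.eq_dec i n) as [->|Hne]; [apply P2; auto; lra | apply P1; auto; lia || lra].
Qed.

Lemma unif_cont_on_rsum T N (c : nat -> R) (F : nat -> R -> R) :
  (forall n, (n < N)%nat -> 0 <= c n) -> (forall n, (n < N)%nat -> unif_cont_on T (F n)) ->
  unif_cont_on T (fun x => rsum N (fun n => c n * F n x)).
Proof.
  intros Hc HF e He. set (C := rsum N c + 1).
  assert (HC : 0 < C) by (unfold C; pose proof (rsum_nonneg N c Hc); lra).
  destruct (unif_cont_on_family T N F HF (e / C) ltac:(apply Rdiv_lt_0_compat; auto))
    as [d [Hd P]].
  exists d; split; auto. intros x y Hx Hy Hxy. rewrite <- rsum_minus.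
  eapply Rle_lt_trans; [apply Rabs_rsum_le|].
  apply Rle_lt_trans with (rsum N (fun n => c n * (e / C))).
  - apply rsum_le. intros n Hn.
    replace (c n * F n x - c n * F n y) with (c n * (F n x - F n y)) by ring.
    rewrite Rabs_mult, Rabs_right by (apply Rle_ge; auto).
    apply Rmult_le_compat_l; auto. left; apply P; auto.
  - rewrite rsum_mult_r. apply Rlt_le_trans with (C * (e / C)); [|right; field; lra].
    apply Rmult_lt_compat_r; [apply Rdiv_lt_0_compat; auto | unfold C; lra].
Qed.

Definition clamp T x := Rmax 0 (Rmin x T).

Lemma clamp_in T x : 0 <= T -> 0 <= clamp T x <= T.
Proof. intros HT. unfold clamp, Rmax, Rmin. repeat destruct Rle_dec; lra. Qed.

Lemma clamp_dist T x y : Rabs (clamp T x - clamp T y) <= Rabs (x - y).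
Proof.
  unfold clamp, Rmax, Rmin. repeat destruct Rle_dec; unfold Rabs; repeat destruct Rcase_abs; lra.
Qed.

Lemma clamp_id T x : 0 <= x <= T -> clamp T x = x.
Proof. intros H. unfold clamp, Rmax, Rmin. repeat destruct Rle_dec; lra. Qed.

(* Uniform continuity of the composite follows from Heine's theorem on [0, T];
   clamping extends f continuously to all of R. *)
Lemma unif_cont_on_rpow T f a : 0 < a -> 0 <= T -> unif_cont_on T f ->
  unif_cont_on T (fun x => rpow (f x) a).
Proof.
  intros Ha HT Hf.
  assert (Hcont : forall x, 0 <= x <= T ->
            continuity_pt (fun x => rpow (f (clamp T x)) a) x).
  { intros x Hx. apply (continuity_pt_comp (fun x => f (clamp T x)) (fun z => rpow z a));
      [|apply continuity_pt_rpow; auto].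
    apply continuity_pt_eps. intros e He. destruct (Hf e He) as [d [Hd Pd]].
    exists d; split; auto. intros z Hz.
    apply Pd; try apply clamp_in; auto.
    pose proof (clamp_dist T z x). lra. }
  intros e He. destruct (Heine _ _ (compact_P3 0 T) Hcont (mkposreal e He)) as [[d Hd] P].
  exists d; split; auto. intros x y Hx Hy Hxy.
  specialize (P x y Hx Hy Hxy). simpl in P. rewrite !clamp_id in P by auto. auto.
Qed.

(** * The MW-alpha Lyapunov function *)

Lemma increment_le_of_short_increments (F G : R -> R) t d : 0 <= t -> 0 < d ->
  (forall u v, 0 <= u -> u <= v -> v <= t -> v - u < d -> F v - F u <= G v - G u) ->
  F t - F 0 <= G t - G 0.
Proof.
  intros Ht Hd Hloc.
  destruct (INR_unbounded (t / d)) as [M HM].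
  assert (HMpos : 0 < INR M)
    by (assert (0 <= t / d) by (apply Rmult_le_pos; [|left; apply Rinv_0_lt_compat]; lra); lra).
  set (h := t / INR M).
  assert (Hh : 0 <= h) by (apply Rmult_le_pos; [|left; apply Rinv_0_lt_compat]; lra).
  assert (Hhd : h < d).
  { unfold h. apply Rmult_lt_reg_r with (INR M); auto.
    replace (t / INR M * INR M) with t by (field; lra).
    apply (Rmult_lt_compat_r d) in HM; [|lra].
    replace (t / d * d) with t in HM by (field; lra). lra. }
  set (tau := fun j : nat => INR j * h).
  assert (Htau : forall j, (j <= M)%nat -> 0 <= tau j <= t).
  { intros j Hj. unfold tau. split; [apply Rmult_le_pos; auto; apply pos_INR|].
    apply Rle_trans with (INR M * h); [apply Rmult_le_compat_r; auto; apply le_INR; auto|].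
    unfold h. right. field. lra. }
  assert (HtauS : forall j, tau (S j) = tau j + h) by (intros j; unfold tau; rewrite S_INR; ring).
  assert (Htel : forall H : R -> R, H t - H 0 = rsum M (fun j => H (tau (S j)) - H (tau j))).
  { intros H. rewrite (rsum_telescope M (fun j => H (tau j))). unfold tau, h.
    simpl INR. f_equal; f_equal; [field; lra | ring]. }
  rewrite !Htel. apply rsum_le. intros j Hj.
  destruct (Htau j ltac:(lia)), (Htau (S j) ltac:(lia)).
  apply Hloc; rewrite ?HtauS in *; lra.
Qed.

Section MWLyapunov.
Variables (N K : nat) (S : nat -> nat -> R) (lam : nat -> R) (alpha T : R) (q y s : nat -> R -> R).
Hypothesis HK : (0 < K)%nat.
Hypothesis HS : forall k n, (k < K)%nat -> (n < N)%nat -> 0 <= S k n.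
Hypothesis Hlam : in_Lambda N K S lam.
Hypothesis Halpha : 0 < alpha.
Hypothesis Hmw : mw_fluid_sol N K S alpha lam T q y s.

Definition weight k tau := dot N (S k) (fun n => rpow (q n tau) alpha).
Definition max_weight tau := rmaxk K (fun j => weight j tau).
Definition lyap tau := rsum N (fun n => rpow (q n tau) (1 + alpha)).

(* Tangent inequality at q(v), the dynamics, and lam . W <= max_weight for W >= 0. *)
Lemma lyap_increment_le u v gam c :
  0 <= u -> u <= v -> v <= T -> 0 <= c ->
  (forall k, (k < K)%nat -> s k v - s k u = 0 \/ max_weight v - gam <= weight k v) ->
  (forall n, (n < N)%nat -> y n v - y n u = 0 \/ rpow (q n v) alpha <= c) ->
  lyap v - lyap u <= (1 + alpha) * ((v - u) * gam + c * rsum N (fun n => y n v - y n u)).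
Proof.
  intros Hu Huv Hv Hc Hs_alt Hy_alt.
  destruct Hmw as [[Hqy [Hs [Hdyn _]]] _].
  destruct (Hdyn u ltac:(lra)) as [Hsu Hqu]. destruct (Hdyn v ltac:(lra)) as [Hsv Hqv].
  set (W := fun n => rpow (q n v) alpha).
  assert (Htan : lyap v - lyap u <= (1 + alpha) * rsum N (fun n => W n * (q n v - q n u))).
  { unfold lyap. rewrite <- rsum_minus, <- rsum_mult_l. apply rsum_le. intros n Hn.
    destruct (Hqy n Hn) as [_ [_ [_ Hq]]].
    destruct (Hq u ltac:(lra)) as [Hqu0 _], (Hq v ltac:(lra)) as [Hqv0 _].
    pose proof (rpow_tangent_le alpha (q n u) (q n v) Halpha Hqu0 Hqv0). unfold W. lra. }
  assert (Hsplit : rsum N (fun n => W n * (q n v - q n u)) =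
    (v - u) * dot N lam W - rsum K (fun k => (s k v - s k u) * weight k v)
    + rsum N (fun n => W n * (y n v - y n u))).
  { rewrite (rsum_ext N _ (fun n => ((v - u) * (lam n * W n)
        - rsum K (fun k => (s k v - s k u) * (S k n * W n))) + W n * (y n v - y n u))).
    - rewrite rsum_plus, rsum_minus, rsum_mult_l, rsum_comm. do 2 f_equal.
      apply rsum_ext. intros k _. unfold weight, dot. rewrite <- rsum_mult_l. auto.
    - intros n Hn. destruct (Hqu n Hn) as [-> _]. destruct (Hqv n Hn) as [-> _].
      rewrite (rsum_ext K (fun k => (s k v - s k u) * (S k n * W n))
                 (fun k => (s k v * S k n - s k u * S k n) * W n)) by (intros; ring).
      rewrite rsum_mult_r, rsum_minus. ring. }
  assert (Harr : dot N lam W <= max_weight v)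
    by (apply dot_Lambda_le_max; auto; intros; apply rpow_nonneg).
  assert (Hserv : (v - u) * (max_weight v - gam)
                  <= rsum K (fun k => (s k v - s k u) * weight k v)).
  { replace (v - u) with (rsum K (fun k => s k v - s k u)) by (rewrite rsum_minus; lra).
    rewrite <- rsum_mult_r. apply rsum_le. intros k Hk. destruct (Hs k Hk) as [Hmon _].
    pose proof (Hmon u v Hu Huv Hv).
    destruct (Hs_alt k Hk) as [->|Hk']; [lra|]. apply Rmult_le_compat_l; lra. }
  assert (Hidle : rsum N (fun n => W n * (y n v - y n u))
                  <= c * rsum N (fun n => y n v - y n u)).
  { rewrite <- rsum_mult_l. apply rsum_le. intros n Hn. destruct (Hqy n Hn) as [_ [_ [Hmon _]]].
    pose proof (Hmon u v Hu Huv Hv).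
    destruct (Hy_alt n Hn) as [->|Hn']; [lra|]. apply Rmult_le_compat_r; unfold W; lra. }
  assert ((v - u) * dot N lam W <= (v - u) * max_weight v) by (apply Rmult_le_compat_l; lra).
  rewrite Hsplit in Htan. eapply Rle_trans; [exact Htan|].
  apply Rmult_le_compat_l; nra.
Qed.

Lemma y_const_of_q_pos n u v : (n < N)%nat -> 0 <= u -> u <= v -> v <= T ->
  (forall tau, u <= tau <= v -> 0 < q n tau) -> y n v - y n u = 0.
Proof.
  intros Hn Hu Huv Hv Hpos. destruct Hmw as [[Hqy [_ [_ Hae]]] _].
  destruct (Hqy n Hn) as [_ [Hac [Hmon _]]].
  assert (y n v <= y n u).
  { apply (abs_cont_deriv_0_ae_le _ u v _ Huv (Hae n Hn) (abs_cont_on_sub 0 T u v _ Hac Hu Hv)).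
    intros tau Htau HE. apply NNPP. intros Hd. apply HE. split; [lra|].
    intros Himp. apply Hd, Himp, Hpos; auto. }
  pose proof (Hmon u v Hu Huv Hv). lra.
Qed.

Lemma s_increment_bounds k x z : (k < K)%nat -> 0 <= x -> x <= z -> z <= T ->
  0 <= s k z - s k x <= z - x.
Proof.
  intros Hk Hx Hxz Hz. destruct Hmw as [[_ [Hs [Hdyn _]]] _].
  destruct (Hdyn x ltac:(lra)) as [Ex _], (Hdyn z ltac:(lra)) as [Ez _].
  assert (Hmon : forall j, (j < K)%nat -> 0 <= s j z - s j x).
  { intros j Hj. destruct (Hs j Hj) as [Hm _]. pose proof (Hm x z Hx Hxz Hz). lra. }
  split; auto.
  pose proof (rsum_ge_term K (fun j => s j z - s j x) k Hmon Hk) as Hle.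
  rewrite rsum_minus, Ex, Ez in Hle. lra.
Qed.

Lemma s_const_of_weight_lt_max k u v : (k < K)%nat -> 0 <= u -> u <= v -> v <= T ->
  (forall tau, u <= tau <= v -> weight k tau < max_weight tau) -> s k v - s k u = 0.
Proof.
  intros Hk Hu Huv Hv Hlt. pose proof (s_increment_bounds k u v Hk Hu Huv Hv).
  destruct Hmw as [_ Hae].
  assert (Hac : abs_cont_on u v (s k)).
  { apply abs_cont_on_lipschitz. intros x z Hx Hxz Hz.
    pose proof (s_increment_bounds k x z Hk ltac:(lra) Hxz ltac:(lra)).
    rewrite Rabs_right; lra. }
  assert (s k v <= s k u); [|lra].
  apply (abs_cont_deriv_0_ae_le _ u v _ Huv (Hae k Hk) Hac).
  intros tau Htau HE. apply NNPP. intros Hd. apply HE. split; [lra|].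
  intros Himp. apply Hd, Himp, Hlt; auto.
Qed.

(* By uniform continuity: a schedule whose weight at v is far from maximal was never
   maximal on [u, v], so MW did not use it; a queue large at v stayed positive on [u, v],
   so it did not idle. *)
Lemma short_interval_alternatives gam th : 0 <= T -> 0 < gam -> 0 < th ->
  exists d, 0 < d /\ forall u v, 0 <= u -> u <= v -> v <= T -> v - u < d ->
  (forall k, (k < K)%nat -> s k v - s k u = 0 \/ max_weight v - gam <= weight k v) /\
  (forall n, (n < N)%nat -> y n v - y n u = 0 \/ rpow (q n v) alpha <= rpow th alpha).
Proof.
  intros HT Hgam Hth. destruct Hmw as [[Hqy _] _].
  assert (Uq : forall n, (n < N)%nat -> unif_cont_on T (q n))
    by (intros n Hn; apply abs_cont_unif_cont, (Hqy n Hn)).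
  destruct (unif_cont_on_family T N q Uq th Hth) as [d1 [Hd1 P1]].
  assert (Uw : forall k, (k < K)%nat -> unif_cont_on T (weight k)).
  { intros k Hk. apply (unif_cont_on_rsum T N (S k) (fun n x => rpow (q n x) alpha)).
    - intros; apply HS; auto.
    - intros n Hn. apply unif_cont_on_rpow; auto. }
  destruct (unif_cont_on_family T K weight Uw (gam / 2) ltac:(lra)) as [d2 [Hd2 P2]].
  exists (Rmin d1 d2). split; [apply Rmin_glb_lt; auto|]. intros u v Hu Huv Hv Hd.
  pose proof (Rmin_l d1 d2). pose proof (Rmin_r d1 d2).
  assert (Hclose : forall tau, u <= tau <= v -> Rabs (tau - v) < Rmin d1 d2)
    by (intros tau Ht; rewrite Rabs_left1; lra).
  split.
  - intros k Hk. destruct (Rle_dec (max_weight v - gam) (weight k v)) as [|Hfar]; [right; auto|].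
    left. apply (s_const_of_weight_lt_max k u v Hk Hu Huv Hv). intros tau Ht.
    destruct (rmaxk_attained K (fun j => weight j v) HK) as [j [Hj Ej]].
    unfold max_weight in Hfar |- *. rewrite Ej in Hfar.
    pose proof (rmaxk_ge K (fun j => weight j tau) j Hj).
    specialize (Hclose tau Ht).
    pose proof (P2 k tau v Hk ltac:(lra) ltac:(lra) ltac:(lra)) as Pk.
    pose proof (P2 j tau v Hj ltac:(lra) ltac:(lra) ltac:(lra)) as Pj.
    apply Rabs_def2 in Pk. apply Rabs_def2 in Pj. lra.
  - intros n Hn. destruct (Hqy n Hn) as [_ [_ [_ Hq]]]. destruct (Hq v ltac:(lra)) as [Hqv _].
    destruct (Rle_dec (q n v) th); [right; apply rpow_le_compat; lra|]. left.
    apply (y_const_of_q_pos n u v Hn Hu Huv Hv). intros tau Ht. specialize (Hclose tau Ht).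
    pose proof (P1 n tau v Hn ltac:(lra) ltac:(lra) ltac:(lra)) as Pn.
    apply Rabs_def2 in Pn. lra.
Qed.

Lemma lyap_growth_le t gam th : 0 <= t <= T -> 0 < gam -> 0 < th ->
  lyap t - lyap 0 <= (1 + alpha) * (t * gam + rpow th alpha * rsum N (fun n => y n t - y n 0)).
Proof.
  intros Ht Hgam Hth.
  destruct (short_interval_alternatives gam th ltac:(lra) Hgam Hth) as [d [Hd Halt]].
  set (c := rpow th alpha).
  set (G := fun tau => (1 + alpha) * (tau * gam + c * rsum N (fun n => y n tau))).
  replace ((1 + alpha) * (t * gam + c * rsum N (fun n => y n t - y n 0))) with (G t - G 0)
    by (unfold G; rewrite rsum_minus; ring).
  apply (increment_le_of_short_increments lyap G t d); [lra|auto|].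
  intros u v Hu Huv Hvt Hvu. destruct (Halt u v Hu Huv ltac:(lra) Hvu) as [Hs_alt Hy_alt].
  replace (G v - G u) with ((1 + alpha) * ((v - u) * gam + c * rsum N (fun n => y n v - y n u)))
    by (unfold G; rewrite rsum_minus; ring).
  apply lyap_increment_le; auto; [lra|apply rpow_nonneg].
Qed.

Lemma lyap_nonincr t : 0 <= t <= T -> lyap t <= lyap 0.
Proof.
  intros Ht. destruct Hmw as [[Hqy _] _].
  set (Y := rsum N (fun n => y n t - y n 0)).
  assert (HY : 0 <= Y).
  { apply rsum_nonneg. intros n Hn. destruct (Hqy n Hn) as [_ [_ [Hmon _]]].
    pose proof (Hmon 0 t ltac:(lra) ltac:(lra) ltac:(lra)). lra. }
  cut (lyap t - lyap 0 <= 0); [lra|].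
  apply (le_0_of_le_eps_mult _ ((1 + alpha) * (t + Y))); [apply Rmult_le_pos; lra|].
  intros e He.
  pose proof (lyap_growth_le t e (rpow e (1 / alpha)) Ht He
                ltac:(rewrite rpow_Rpower by auto; apply Rpower_pos)) as Hgrowth.
  rewrite rpow_inv_rpow in Hgrowth by lra. fold Y in Hgrowth. lra.
Qed.

End MWLyapunov.

Lemma mw_total_le N K S lam alpha T q y s t :
  (0 < K)%nat -> (forall k n, (k < K)%nat -> (n < N)%nat -> 0 <= S k n) ->
  in_Lambda N K S lam -> 0 < alpha -> mw_fluid_sol N K S alpha lam T q y s -> 0 <= t <= T ->
  rsum N (fun n => q n t) <= Rpower (INR N) (alpha / (1 + alpha)) * rsum N (fun n => q n 0).
Proof.
  intros HK HS Hlam Ha Hmw Ht.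
  destruct (Nat.eq_dec N 0) as [->|HN]; [simpl; lra|].
  assert (Hq : forall tau, 0 <= tau <= T -> forall n, (n < N)%nat -> 0 <= q n tau)
    by (intros tau Htau n Hn; destruct Hmw as [[Hqy _] _];
        destruct (Hqy n Hn) as [_ [_ [_ Hq]]]; apply Hq; auto).
  assert (Hp : 0 < 1 / (1 + alpha)) by (apply Rdiv_lt_0_compat; lra).
  eapply Rle_trans; [apply (rsum_le_power_mean alpha); [auto|lia|apply Hq; auto]|].
  apply Rmult_le_compat_l; [left; apply Rpower_pos|].
  rewrite <- (rpow_rpow_inv (rsum N (fun n => q n 0)) (1 + alpha))
    by (try apply rsum_nonneg; try apply Hq; lra).
  apply rpow_le_compat; [lra|]. split; [apply rsum_nonneg; intros; apply rpow_nonneg|].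
  eapply Rle_trans; [apply (lyap_nonincr N K S lam alpha T q y s); auto|].
  apply rsum_rpow_le_rpow_rsum; auto. apply Hq; lra.
Qed.

Theorem theorem8p2 (N K : nat) (S : nat -> nat -> R) (lam : nat -> R)
  (HK : (0 < K)%nat)
  (HS : forall k n, (k < K)%nat -> (n < N)%nat -> 0 <= S k n)
  (Hlam : in_Lambda N K S lam) :
  (forall alpha : R, 0 < alpha ->
     forall (T : R) (q y s : nat -> R -> R),
       mw_fluid_sol N K S alpha lam T q y s ->
       forall t, 0 <= t <= T ->
         rsum N (fun n => q n t)
           <= Rpower (INR N) (alpha / (1 + alpha)) * rsum N (fun n => q n 0)) /\
  (complete_loading N K S lam ->
     forall (T : R) (q y s : nat -> R -> R),
       fluid_sol N K S lam T q y s ->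
       forall t, 0 <= t <= T ->
         rsum N (fun n => q n 0) <= rsum N (fun n => q n t)).
Proof.
  split.
  - intros alpha Ha T q y s Hmw t Ht. eapply mw_total_le; eauto.
  - intros Hcl T q y s Hfl t Ht. eapply complete_loading_total_nondecr; eauto.
Qed.
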